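(* Let $n\ge 1$, let $w \in S_n$ be a permutation of $\{1,\dots,n\}$, and let $\phi(w) = p_1 \cdots p_n$ be the associated Motzkin path. Then \[\operatorname{dep}(w) = \sum_{k:\, p_k = D} k \;-\; \sum_{i:\, p_i = U} i.\]
   Context: For $w\in S_n$, the depth is $\operatorname{dep}(w)=\sum_{i:\,w(i)>i}(w(i)-i)$, i.e. half the total displacement $\sum_{i=1}^n |w(i)-i|$. (This equals the minimum of $\sum_{s=1}^k (j_s-i_s)$ over all factorizations $w=(i_1\,j_1)\cdots(i_k\,j_k)$ into transpositions with $i_s<j_s$.) A Motzkin path of length $n$ is a word $p_1\cdots p_n$ in the letters $U,D,H$ such that the subword formed by the letters $U$ and $D$ is a balanced parenthesization ($U$ opening, $D$ closing). The map $\phi\colon S_n\to\{\text{Motzkin paths of length } n\}$ is defined by $\phi(w)=p_1\cdots p_n$ where $p_i=U$ if $w^{-1}(i)>i<w(i)$, $p_i=D$ if $w^{-1}(i)<i>w(i)$, and $p_i=H$ otherwise. *)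

From HB Require Import structures.
From mathcomp Require Import all_boot all_algebra fingroup perm.
Set Implicit Arguments. Unset Strict Implicit. Unset Printing Implicit Defensive.

(* Permutations of {1,...,n} are modelled as w : 'S_n acting on 'I_n = {0,...,n-1};
   position i : 'I_n stands for the integer i+1.  Shifting by 1 does not change
   differences w(i) - i nor comparisons. *)

Definition dep n (w : 'S_n) : nat :=
  \sum_(i < n | i < w i) (w i - i).

Inductive motzkin_letter := U | D | H.

Definition motzkin_letter_eqb (a b : motzkin_letter) : bool :=
  match a, b with U, U | D, D | H, H => true | _, _ => false end.
Lemma motzkin_letter_eqP : Equality.axiom motzkin_letter_eqb.
Proof. by case; case; constructor. Qed.
HB.instance Definition _ := hasDecEq.Build motzkin_letter motzkin_letter_eqP.

Definition phi_letter n (w : 'S_n) (i : 'I_n) : motzkin_letter :=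
  if (i < (w^-1)%g i) && (i < w i) then U
  else if ((w^-1)%g i < i) && (w i < i) then D
  else H.

Definition phi n (w : 'S_n) : seq motzkin_letter :=
  [seq phi_letter w i | i <- enum 'I_n].

From mathcomp Require Import all_boot all_algebra fingroup perm.
Set Implicit Arguments.
Unset Strict Implicit.
Unset Printing Implicit Defensive.
Import GRing.Theory.
Local Open Scope ring_scope.

(* Writing w(i) - i as (w(i)+1) - (i+1), the depth is the sum of the weights
   j+1 of the excedance tops j = w(i) minus that of the excedance bottoms i.
   Reindexing by w, j is an excedance top iff w^-1(j) < j.  So position j
   contributes +(j+1) if w^-1(j) < j, and -(j+1) if j < w(j); exactly one of
   these happens for D resp. U, and both or neither for H. *)

Lemma sumrB_mkcond (R : zmodType) (I : finType) (P Q : pred I) (F : I -> R) :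
  \sum_(i | P i) F i - \sum_(i | Q i) F i
  = \sum_i ((if P i then F i else 0) - (if Q i then F i else 0)).
Proof. by rewrite (big_mkcond P) (big_mkcond Q) sumrB. Qed.

Section Excedances.

Variables (n : nat) (w : 'S_n).

Lemma permV_fixE (j : 'I_n) : ((w^-1)%g j == j) = (w j == j).
Proof. by rewrite -(inj_eq (@perm_inj _ w)) permKV eq_sym. Qed.

Lemma big_excedance_top (R : nmodType) (F : 'I_n -> R) :
  \sum_(i : 'I_n | (i < w i)%N) F (w i) = \sum_(j : 'I_n | ((w^-1)%g j < j)%N) F j.
Proof.
rewrite [RHS](reindex_inj (@perm_inj _ w)) /=.
by apply: eq_bigl => i; rewrite permK.
Qed.

Lemma dep_excedance_weights :
  (dep w)%:Z = \sum_(i : 'I_n | (i < w i)%N) ((w i).+1%:Z - i.+1%:Z).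
Proof.
rewrite /dep (big_morph Posz PoszD (erefl _)).
by apply: eq_bigr => i lt_iw; rewrite [RHS]subzn ?subSS // ltnW.
Qed.

Lemma phi_letter_signed (R : zmodType) (j : 'I_n) (x : R) :
  (if phi_letter w j == D then x else 0) - (if phi_letter w j == U then x else 0)
  = (if ((w^-1)%g j < j)%N then x else 0) - (if (j < w j)%N then x else 0).
Proof.
have fixE := permV_fixE j; rewrite /phi_letter.
case: (ltngtP j (w j)) => [lt_jw|lt_wj|/val_inj fix_j].
- have nfixV : (w^-1)%g j != j :> nat by rewrite val_eqE fixE -val_eqE neq_ltn lt_jw orbT.
  by case: (ltngtP ((w^-1)%g j) j) nfixV => //= *; rewrite ?subr0 ?subrr.
- have nfixV : (w^-1)%g j != j :> nat by rewrite val_eqE fixE -val_eqE neq_ltn lt_wj.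
  by case: (ltngtP ((w^-1)%g j) j) nfixV => //= *; rewrite ?sub0r ?subrr.
- have fixV : (w^-1)%g j = j by apply: (@perm_inj _ w); rewrite permKV.
  by rewrite fixV ltnn.
Qed.

Lemma nth_phi (x0 : motzkin_letter) (k : 'I_n) : nth x0 (phi w) k = phi_letter w k.
Proof. by rewrite (nth_map k) ?size_enum_ord // nth_ord_enum. Qed.

End Excedances.

Theorem proposition3p1 (n : nat) (hn : (1 <= n)%N) (w : 'S_n) :
  (dep w)%:Z =
    (\sum_(k < n | nth H (phi w) k == D) (k.+1)%:Z)
    - (\sum_(i < n | nth H (phi w) i == U) (i.+1)%:Z).
Proof.
rewrite dep_excedance_weights sumrB.
rewrite (big_excedance_top w (fun j : 'I_n => j.+1%:Z)) !sumrB_mkcond.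
by apply: eq_bigr => j _; rewrite nth_phi phi_letter_signed.
Qed.
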